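(* Let $\tilde g$ be a Kerr–Schild–de Sitter metric and $g=\Omega^2\tilde g$ a geodesic conformal extension with boundary metric $\gamma$, in the setting where the electric part of the rescaled Weyl tensor at $\mathscr I$ is $D=A(y\otimes y-\frac1n\gamma)$ with $A$ nowhere zero, written as $A=\kappa/f^n$ with $\kappa\in\mathbb R\setminus\{0\}$ and $f>0$ on $\mathscr I$ (here $y$ is the restriction to $\mathscr I$ of the unit vector in the decomposition $k=s(u+y)$). Then, with the notation $L=\nabla^\gamma_\alpha y^\alpha$ and $a_\beta$ as in the decomposition $\nabla^\gamma_\alpha y_\beta=y_\alpha a_\beta+\Pi_{\alpha\beta}+\frac{L}{n-1}h_{\alpha\beta}+w_{\alpha\beta}$, $\nabla^\gamma_\alpha f=\frac{fL}{n-1}y_\alpha-fa_\alpha$. (Equivalently: for a unit vector field $y$ and positive $f$ on $(\Sigma,\gamma)$, the tensor $f^{-n}(y\otimes y-\frac1n\gamma)$ is divergence-free with respect to $\gamma$ if and only if this equation holds.)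
   Context: $n\ge3$. Kerr–Schild–de Sitter spacetime: $\tilde g=\tilde g_{dS}+\widetilde{\mathcal H}\tilde k\otimes\tilde k$ ($\tilde g_{dS}$ locally de Sitter, $\tilde k$ null, $\widetilde{\mathcal H}$ smooth) solving $\widetilde R_{\alpha\beta}=n\lambda\tilde g_{\alpha\beta}$, $\lambda>0$, with a smooth conformal extension having locally conformally flat $\mathscr I$ and $\Omega^2\widetilde{\mathcal H}\tilde k\otimes\tilde k=0$ at $\mathscr I$. Geodesic conformal extension: $g^{\mu\nu}\nabla_\mu\Omega\nabla_\nu\Omega=-\lambda$. $u$: $g$-unit timelike vector along $\nabla\Omega$; $k=\tilde k$ decomposed as $k_\alpha=s(u_\alpha+y_\alpha)$ with $y$ unit spacelike orthogonal to $u$. $D_{\alpha\beta}=(\Omega^{2-n}C^\mu{}_{\alpha\nu\beta}u_\mu u^\nu)|_{\mathscr I}$ ($C$ Weyl tensor of $g$) is a symmetric traceless divergence-free tensor with respect to $\gamma$. $h_{\alpha\beta}=\gamma_{\alpha\beta}-y_\alpha y_\beta$; in the decomposition, $\Pi$ is symmetric traceless, $w$ skew, $a$ a one-form, all orthogonal to $y$. *)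

(* Local-coordinate Riemannian geometry on an open
   subset of R^n (points are row vectors 'rV[R]_n). *)
From HB Require Import structures.
From mathcomp Require Import all_boot all_order all_algebra.
From mathcomp Require Import all_classical all_reals all_analysis.
Set Implicit Arguments. Unset Strict Implicit. Unset Printing Implicit Defensive.
Import Order.TTheory GRing.Theory Num.Theory.
Import numFieldNormedType.Exports.
Local Open Scope ring_scope.

Section Geom.
Context {R : realType} {n : nat}.
Notation pt := 'rV[R]_n.

Definition metric := pt -> 'M[R]_n.
Definition vfield := pt -> 'I_n -> R.
Definition tfield := pt -> 'I_n -> 'I_n -> R.

Definition pd (i : 'I_n) (F : pt -> R) (x : pt) : R :=
  derive F x (delta_mx 0 i).

Definition ginv (g : metric) (x : pt) : 'M[R]_n := invmx (g x).

Definition christoffel (g : metric) (k i j : 'I_n) (x : pt) : R :=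
  2^-1 * \sum_(l < n) ginv g x k l *
    (pd i (fun z => g z j l) x + pd j (fun z => g z i l) x
     - pd l (fun z => g z i j) x).

Definition lower (g : metric) (y : vfield) (x : pt) (i : 'I_n) : R :=
  \sum_(j < n) g x i j * y x j.

Definition cov_low (g : metric) (y : vfield) (x : pt) (a b : 'I_n) : R :=
  pd a (fun z => lower g y z b) x
  - \sum_(l < n) christoffel g l a b x * lower g y x l.

Definition div_vec (g : metric) (y : vfield) (x : pt) : R :=
  \sum_(a < n) (pd a (fun z => y z a) x
                + \sum_(l < n) christoffel g a a l x * y x l).

Definition cov_T2 (g : metric) (T : tfield) (x : pt) (m a b : 'I_n) : R :=
  pd m (fun z => T z a b) x
  - \sum_(l < n) (christoffel g l m a x * T x l b
                  + christoffel g l m b x * T x a l).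

Definition div_T2 (g : metric) (T : tfield) (x : pt) (b : 'I_n) : R :=
  \sum_(a < n) \sum_(m < n) ginv g x a m * cov_T2 g T x m a b.

Definition Dtensor (g : metric) (y : vfield) (f : pt -> R) (kappa : R) : tfield :=
  fun z a b => kappa / f z ^+ n *
    (lower g y z a * lower g y z b - n%:R^-1 * g z a b).

Definition hproj (g : metric) (y : vfield) (x : pt) (a b : 'I_n) : R :=
  g x a b - lower g y x a * lower g y x b.

End Geom.

From HB Require Import structures.
From mathcomp Require Import all_boot all_order all_algebra.
From mathcomp Require Import all_classical all_reals all_analysis.
From mathcomp Require Import ring.
Import Order.TTheory GRing.Theory Num.Theory.
Import numFieldNormedType.Exports.
Local Open Scope ring_scope.
Local Open Scope classical_set_scope.

(* With A = kappa f^(-n), metric compatibility and the Leibniz rule give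
     nabla^a D_ab = (y.nabla A) y_b - nabla_b A / n + A (L y_b + y^a nabla_a y_b),
   while the decomposition of nabla y gives y^a nabla_a y_b = a_b and
   nabla^a y_a = L.  Contracting div D = 0 with y^b yields
   (1 - 1/n) y.nabla A = - A L; substituting back gives
   nabla A = n A (a - L y / (n - 1)), and nabla A = - n A nabla f / f with
   A <> 0 turns this into the formula for nabla f. *)

(* Turns an identity between linear combinations of sums over 'I_n into one
   between their summands. *)
Ltac merge_sums :=
  do 3 rewrite ?mulr_sumr ?mulr_suml -?sumrN -?big_split /=; apply: eq_bigr => ? _.

Section IndexContraction.
Context {R : numFieldType} {n : nat}.
Implicit Types (F : 'I_n -> R) (S W : 'I_n -> 'I_n -> R).

Lemma sum_mul_mx1 F b : \sum_k F k * (1%:M : 'M[R]_n) k b = F b.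
Proof.
have := congr1 (fun M : 'rV_n => M 0 b) (mulmx1 (\row_k F k)).
by rewrite /= !mxE => <-; apply: eq_bigr => k _; rewrite !mxE.
Qed.

Lemma sum_mx1_mul F b : \sum_k (1%:M : 'M[R]_n) b k * F k = F b.
Proof.
have := congr1 (fun M : 'cV_n => M b 0) (mul1mx (\col_k F k)).
by rewrite /= !mxE => <-; apply: eq_bigr => k _; rewrite !mxE.
Qed.

Lemma sum_sym_mul_antisym {S W} : (forall i j, S i j = S j i) ->
  (forall i j, W i j = - W j i) -> \sum_i \sum_j S i j * W i j = 0.
Proof.
move=> Ssym Wanti; set T := (X in X = 0).
have TN : T = - T.
  rewrite {1}/T exchange_big /= -sumrN; apply: eq_bigr => i _.
  by rewrite -sumrN; apply: eq_bigr => j _; rewrite Ssym Wanti mulrN.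
have : T *+ 2 == 0 by rewrite mulr2n {2}TN subrr.
by rewrite mulrn_eq0 => /eqP.
Qed.

Context {G Gi : 'M[R]_n}.
Hypothesis GiG : Gi^T *m G = 1%:M.

Lemma sum_inv_mul_metric m b : \sum_a Gi a m * G a b = (1%:M : 'M[R]_n) m b.
Proof. by rewrite -GiG mxE; apply: eq_bigr => a _; rewrite mxE. Qed.

Lemma sum_raise_lowered F m : \sum_a Gi a m * (\sum_j G a j * F j) = F m.
Proof.
rewrite -[RHS](sum_mx1_mul F m); under eq_bigr do rewrite mulr_sumr.
rewrite exchange_big /=; apply: eq_bigr => j _.
by rewrite -sum_inv_mul_metric mulr_suml; apply: eq_bigr => a _; rewrite mulrA.
Qed.

Lemma sum_lower_raised F b : \sum_l (\sum_k Gi l k * F k) * G l b = F b.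
Proof.
rewrite -[RHS](sum_mul_mx1 F b); under eq_bigr do rewrite mulr_suml.
rewrite exchange_big /=; apply: eq_bigr => k _.
by rewrite -sum_inv_mul_metric mulr_sumr; apply: eq_bigr => l _; ring.
Qed.

Hypotheses (Gsym : forall i j, G i j = G j i) (Gisym : forall i j, Gi i j = Gi j i).
Context {Y ll : 'I_n -> R}.
Hypothesis ll_def : forall b, ll b = \sum_j G b j * Y j.

Lemma sum_Y_mul_llE : \sum_i Y i * ll i = \sum_i \sum_j G i j * Y i * Y j.
Proof.
apply: eq_bigr => i _; rewrite ll_def mulr_sumr.
by apply: eq_bigr => j _; rewrite mulrCA mulrA.
Qed.

Hypothesis Y_ll : \sum_i Y i * ll i = 1.

Lemma sum_raise_ll m : \sum_a Gi a m * ll a = Y m.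
Proof. by rewrite -[RHS](sum_raise_lowered Y); apply: eq_bigr => a _; rewrite ll_def. Qed.

Lemma sum_Y_mul_metric b : \sum_m Y m * G m b = ll b.
Proof. by rewrite ll_def; apply: eq_bigr => m _; rewrite Gsym mulrC. Qed.

Lemma trace_outer_ll F : \sum_i \sum_j Gi i j * (ll i * F j) = \sum_j Y j * F j.
Proof.
rewrite exchange_big /=; apply: eq_bigr => j _.
rewrite -(sum_raise_ll j) mulr_suml; apply: eq_bigr => i _.
by rewrite Gisym mulrA.
Qed.

Lemma trace_metric : \sum_i \sum_j Gi i j * G i j = n%:R.
Proof.
transitivity (\sum_(j < n) (1 : R)); last by rewrite sumr_const card_ord.
rewrite exchange_big /=; apply: eq_bigr => j _.
by rewrite sum_inv_mul_metric mxE eqxx.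
Qed.

Lemma div_Dtensor_contract (C : 'I_n -> 'I_n -> R) (dA : 'I_n -> R) (A : R) b :
  \sum_a \sum_m Gi a m * (dA m * (ll a * ll b - n%:R^-1 * G a b)
                           + A * (C m a * ll b + ll a * C m b))
  = (\sum_m dA m * Y m) * ll b - n%:R^-1 * dA b
    + A * ((\sum_m \sum_a Gi a m * C m a) * ll b + \sum_m Y m * C m b).
Proof.
have inner m : \sum_a Gi a m * (dA m * (ll a * ll b - n%:R^-1 * G a b)
                               + A * (C m a * ll b + ll a * C m b)) =
    dA m * Y m * ll b - n%:R^-1 * (dA m * 1%:M m b)
    + A * ((\sum_a Gi a m * C m a) * ll b + Y m * C m b).
  rewrite -sum_raise_ll -sum_inv_mul_metric.
  by merge_sums; ring.
rewrite exchange_big /=; under eq_bigr do rewrite inner.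
by rewrite big_split sumrB /= -!mulr_sumr big_split /= -!mulr_suml sum_mul_mx1.
Qed.

Lemma grad_of_div_free {dA aa : 'I_n -> R} {A L : R} : (1 < n)%N ->
  \sum_i Y i * aa i = 0 ->
  (forall b, (\sum_m dA m * Y m) * ll b - n%:R^-1 * dA b + A * (L * ll b + aa b) = 0) ->
  forall b, dA b = n%:R * A * (aa b - L / (n%:R - 1) * ll b).
Proof.
move=> n_gt1 Y_aa div0.
have n0 : n%:R != 0 :> R by rewrite pnatr_eq0 -lt0n ltnW.
have n1 : n%:R - 1 != 0 :> R by rewrite subr_eq0 pnatr_eq1 gtn_eqF.
set s := \sum_m dA m * Y m.
have div_y : s * (1 - n%:R^-1) + A * L = 0.
  have <- : \sum_b Y b * (s * ll b - n%:R^-1 * dA b + A * (L * ll b + aa b)) = 0.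
    by apply: big1 => b _; rewrite div0 mulr0.
  transitivity (s * \sum_b Y b * ll b - n%:R^-1 * \sum_b dA b * Y b
                + A * (L * \sum_b Y b * ll b + \sum_b Y b * aa b)).
    by rewrite Y_ll Y_aa -/s; ring.
  by merge_sums; ring.
have s_val : s = - (n%:R * A * L) / (n%:R - 1).
  have s_mul : s * (1 - n%:R^-1) = - (A * L) by rewrite -[LHS](addrK (A * L)) div_y sub0r.
  have -> : s = s * (1 - n%:R^-1) * n%:R / (n%:R - 1) by field; rewrite n0 n1.
  by rewrite s_mul; field.
move=> b.
have -> : dA b = n%:R * (s * ll b + A * (L * ll b + aa b))
                 - n%:R * (s * ll b - n%:R^-1 * dA b + A * (L * ll b + aa b)).
  by field.
by rewrite div0 mulr0 subr0 s_val; field.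
Qed.

Context {C P W : 'I_n -> 'I_n -> R} {aa : 'I_n -> R} {L : R}.
Hypothesis C_decomp : forall al be, C al be =
  ll al * aa be + P al be + L / (n%:R - 1) * (G al be - ll al * ll be) + W al be.

Lemma decomp_contract_y : (forall j, \sum_i Y i * P i j = 0) ->
  (forall j, \sum_i Y i * W i j = 0) -> forall b, \sum_m Y m * C m b = aa b.
Proof.
move=> Y_P Y_W b; under eq_bigr do rewrite C_decomp.
transitivity (aa b * \sum_i Y i * ll i + \sum_i Y i * P i b
  + L / (n%:R - 1) * (\sum_i Y i * G i b - ll b * \sum_i Y i * ll i) + \sum_i Y i * W i b).
  by merge_sums; ring.
by rewrite Y_ll Y_P sum_Y_mul_metric Y_W; ring.
Qed.

Lemma decomp_trace : (1 < n)%N -> \sum_i \sum_j Gi i j * P i j = 0 ->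
  (forall i j, W i j = - W j i) -> \sum_i Y i * aa i = 0 ->
  \sum_m \sum_a Gi a m * C m a = L.
Proof.
move=> n_gt1 trP Wanti Y_aa.
have n1 : n%:R - 1 != 0 :> R by rewrite subr_eq0 pnatr_eq1 gtn_eqF.
transitivity (\sum_i \sum_j Gi i j * C i j).
  by apply: eq_bigr => i _; apply: eq_bigr => j _; rewrite Gisym.
under eq_bigr do under eq_bigr do rewrite C_decomp.
transitivity (\sum_i \sum_j Gi i j * (ll i * aa j) + \sum_i \sum_j Gi i j * P i j
  + L / (n%:R - 1) * (\sum_i \sum_j Gi i j * G i j - \sum_i \sum_j Gi i j * (ll i * ll j))
  + \sum_i \sum_j Gi i j * W i j).
  by merge_sums; merge_sums; ring.
rewrite !trace_outer_ll Y_aa trP trace_metric Y_ll (sum_sym_mul_antisym Gisym Wanti).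
by field.
Qed.
End IndexContraction.

Lemma posdef_unitmx (R : numFieldType) n (M : 'M[R]_n) :
  (forall v : 'rV[R]_n, v != 0 -> 0 < (v *m M *m v^T) 0 0) -> M \in unitmx.
Proof.
move=> M_pd; rewrite unitmxE unitfE; apply/negP => /det0P [v v0 vM].
by have := M_pd v v0; rewrite vM mul0mx mxE ltxx.
Qed.

Section ScalarDerivative.
Context {R : realType} {V : normedModType R}.
Implicit Types (F : V -> R) (x v : V).

Lemma derivable_pow {F} (m : nat) {x v} : derivable F x v ->
  derivable (fun z => F z ^+ m) x v.
Proof. by move=> dF; have := @derivableX _ _ F m x v dF; rewrite exprfctE. Qed.

Lemma derive_funB (F G : V -> R) x v : derivable F x v -> derivable G x v ->
  derive (fun z => F z - G z) x v = derive F x v - derive G x v.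
Proof. exact: deriveB. Qed.

Lemma derive_funM (F G : V -> R) x v : derivable F x v -> derivable G x v ->
  derive (fun z => F z * G z) x v = F x * derive G x v + G x * derive F x v.
Proof. exact: deriveM. Qed.

Lemma derivable_div_pow F (k : R) (m : nat) x v : F x != 0 -> derivable F x v ->
  derivable (fun z => k / F z ^+ m) x v.
Proof.
move=> Fx0 dF; have dk : derivable (fun _ : V => k) x v := derivable_cst k x v.
have dV : derivable (fun z => (F z ^+ m)^-1) x v.
  by apply: derivableV; [exact: expf_neq0 | exact: derivable_pow].
by have := derivableM dk dV.
Qed.

Lemma derive_div_pow F (k : R) (m : nat) x v :
  (0 < m)%N -> F x != 0 -> derivable F x v ->
  derive (fun z => k / F z ^+ m) x v = - (m%:R * (k / F x ^+ m) / F x) * derive F x v.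
Proof.
move=> m0 Fx0 dF; have dk : derivable (fun _ : V => k) x v := derivable_cst k x v.
have dFm := derivable_pow m dF; have Fm0 : F x ^+ m != 0 by rewrite expf_neq0.
have dV : derivable (fun z => (F z ^+ m)^-1) x v by exact: derivableV.
rewrite deriveM // deriveV // (derive_cst k x v).
have := deriveX m dF; rewrite exprfctE => ->.
rewrite (_ : F x ^+ m = F x * F x ^+ m.-1); last by rewrite -exprS prednK.
by rewrite /GRing.scale /=; field; rewrite Fx0 expf_neq0.
Qed.

End ScalarDerivative.

Section CovariantDerivative.
Context {R : realType} {n : nat}.
Context {g : 'rV[R]_n -> 'M[R]_n} {x : 'rV[R]_n}.
Implicit Types (T S : 'rV[R]_n -> 'I_n -> 'I_n -> R) (m : 'I_n).

Lemma cov_T2_sub T S m a b :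
  (forall i j, derivable (fun z => T z i j) x (delta_mx 0 m)) ->
  (forall i j, derivable (fun z => S z i j) x (delta_mx 0 m)) ->
  cov_T2 g (fun z i j => T z i j - S z i j) x m a b
  = cov_T2 g T x m a b - cov_T2 g S x m a b.
Proof.
move=> dT dS; rewrite /cov_T2 /pd derive_funB //.
suff -> : \sum_l (christoffel g l m a x * (T x l b - S x l b)
                  + christoffel g l m b x * (T x a l - S x a l))
  = \sum_l (christoffel g l m a x * T x l b + christoffel g l m b x * T x a l)
    - \sum_l (christoffel g l m a x * S x l b + christoffel g l m b x * S x a l)
  by ring.
by rewrite -sumrB; apply: eq_bigr => l _; ring.
Qed.

Lemma cov_T2_scale (P : 'rV[R]_n -> R) T m a b : derivable P x (delta_mx 0 m) ->
  (forall i j, derivable (fun z => T z i j) x (delta_mx 0 m)) ->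
  cov_T2 g (fun z i j => P z * T z i j) x m a b
  = pd m P x * T x a b + P x * cov_T2 g T x m a b.
Proof.
move=> dP dT; rewrite /cov_T2 /pd derive_funM //.
suff -> : \sum_l (christoffel g l m a x * (P x * T x l b)
                  + christoffel g l m b x * (P x * T x a l))
  = P x * \sum_l (christoffel g l m a x * T x l b + christoffel g l m b x * T x a l)
  by ring.
by rewrite mulr_sumr; apply: eq_bigr => l _; ring.
Qed.

Lemma cov_T2_lower_outer (y : 'rV[R]_n -> 'I_n -> R) m a b :
  (forall i, derivable (fun z => lower g y z i) x (delta_mx 0 m)) ->
  cov_T2 g (fun z i j => lower g y z i * lower g y z j) x m a b
  = cov_low g y x m a * lower g y x b + lower g y x a * cov_low g y x m b.
Proof.
move=> dl; rewrite /cov_T2 /cov_low /pd derive_funM //.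
suff -> : \sum_l (christoffel g l m a x * (lower g y x l * lower g y x b)
                  + christoffel g l m b x * (lower g y x a * lower g y x l))
  = lower g y x b * \sum_l christoffel g l m a x * lower g y x l
    + lower g y x a * \sum_l christoffel g l m b x * lower g y x l
  by ring.
by rewrite !mulr_sumr -big_split /=; apply: eq_bigr => l _; ring.
Qed.

Lemma derivable_lower (y : 'rV[R]_n -> 'I_n -> R) v b :
  (forall i j, derivable (fun z => g z i j) x v) ->
  (forall i, derivable (fun z => y z i) x v) ->
  derivable (fun z => lower g y z b) x v.
Proof.
move=> dg dy.
have dterm j : derivable (fun z => g z b j * y z j) x v by have := derivableM (dg b j) (dy j).
by have := derivable_sum dterm; rewrite fct_sumE.
Qed.

Hypotheses (g_sym_near : \forall z \near x, (g z)^T = g z) (g_unit : g x \in unitmx).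

Lemma metric_sym i j : g x i j = g x j i.
Proof. by rewrite -[in LHS](nbhs_singleton g_sym_near) mxE. Qed.

Lemma trmx_ginv : (ginv g x)^T = ginv g x.
Proof. by rewrite /ginv trmx_inv (nbhs_singleton g_sym_near). Qed.

Lemma ginv_sym i j : ginv g x i j = ginv g x j i.
Proof. by rewrite -[in LHS]trmx_ginv mxE. Qed.

Lemma ginv_mul_metric : (ginv g x)^T *m g x = 1%:M.
Proof. by rewrite trmx_ginv /ginv mulVmx. Qed.

Lemma pd_metric_sym m i j : pd m (fun z => g z i j) x = pd m (fun z => g z j i) x.
Proof. by apply: near_eq_derive; apply: filterS g_sym_near => z gz; rewrite -[in RHS]gz mxE. Qed.

Lemma christoffel_lowerE i j k : \sum_l christoffel g l i j x * g x l k
  = 2^-1 * (pd i (fun z => g z j k) x + pd j (fun z => g z i k) x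
            - pd k (fun z => g z i j) x).
Proof.
under eq_bigr do rewrite /christoffel -mulrA.
by rewrite -mulr_sumr sum_lower_raised // ginv_mul_metric.
Qed.

Lemma cov_T2_metric m a b : cov_T2 g (fun z i j => g z i j) x m a b = 0.
Proof.
rewrite /cov_T2 big_split /=.
under [X in _ - (_ + X)]eq_bigr do rewrite metric_sym.
by rewrite !christoffel_lowerE (pd_metric_sym m b a); field.
Qed.

Lemma cov_T2_Dtensor (y : 'rV[R]_n -> 'I_n -> R) f kappa m a b : f x != 0 ->
  (forall v, derivable f x v) ->
  (forall i j v, derivable (fun z => g z i j) x v) ->
  (forall i v, derivable (fun z => y z i) x v) ->
  cov_T2 g (Dtensor g y f kappa) x m a b
  = pd m (fun z => kappa / f z ^+ n) x
      * (lower g y x a * lower g y x b - n%:R^-1 * g x a b)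
    + kappa / f x ^+ n * (cov_low g y x m a * lower g y x b
                          + lower g y x a * cov_low g y x m b).
Proof.
move=> fx0 df dg dy; pose e : 'rV[R]_n := delta_mx 0 m.
have dl i : derivable (fun z => lower g y z i) x e by exact: derivable_lower.
have dc : derivable (fun _ => n%:R^-1 : R) x e := derivable_cst _ x e.
have dll i j : derivable (fun z => lower g y z i * lower g y z j) x e.
  by have := derivableM (dl i) (dl j).
have dcg i j : derivable (fun z => n%:R^-1 * g z i j) x e.
  by have := derivableM dc (dg i j e).
have dT i j : derivable (fun z => lower g y z i * lower g y z j - n%:R^-1 * g z i j) x e.
  by have := derivableB (dll i j) (dcg i j).
rewrite /Dtensor cov_T2_scale //; last exact: derivable_div_pow.
rewrite cov_T2_sub // cov_T2_lower_outer // cov_T2_scale // cov_T2_metric.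
by rewrite /pd (derive_cst _ x e); ring.
Qed.

Lemma div_T2_Dtensor (y : 'rV[R]_n -> 'I_n -> R) f kappa b : f x != 0 ->
  (forall v, derivable f x v) ->
  (forall i j v, derivable (fun z => g z i j) x v) ->
  (forall i v, derivable (fun z => y z i) x v) ->
  div_T2 g (Dtensor g y f kappa) x b
  = (\sum_m pd m (fun z => kappa / f z ^+ n) x * y x m) * lower g y x b
    - n%:R^-1 * pd b (fun z => kappa / f z ^+ n) x
    + kappa / f x ^+ n
      * ((\sum_m \sum_a ginv g x a m * cov_low g y x m a) * lower g y x b
         + \sum_m y x m * cov_low g y x m b).
Proof.
move=> fx0 df dg dy; rewrite /div_T2.
under eq_bigr do under eq_bigr do rewrite cov_T2_Dtensor //.
exact: (div_Dtensor_contract ginv_mul_metric (fun _ => erefl)).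
Qed.

End CovariantDerivative.

Theorem lemma4p4 (R : realType) (n : nat) (U : set 'rV[R]_n)
  (g : 'rV[R]_n -> 'M[R]_n) (y : 'rV[R]_n -> 'I_n -> R) (f : 'rV[R]_n -> R)
  (kappa : R)
  (a : 'rV[R]_n -> 'I_n -> R) (Pi w : 'rV[R]_n -> 'I_n -> 'I_n -> R) :
  (3 <= n)%N ->
  open U ->
  (forall x, U x -> (g x)^T = g x) ->
  (forall x, U x -> forall v : 'rV[R]_n, v != 0 -> 0 < (v *m g x *m v^T) 0 0) ->
  (forall x, U x -> forall i j, differentiable (fun z => g z i j) x) ->
  (forall x, U x -> forall i, differentiable (fun z => y z i) x) ->
  (forall x, U x -> \sum_(i < n) \sum_(j < n) g x i j * y x i * y x j = 1) ->
  (forall x, U x -> differentiable f x) ->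
  (forall x, U x -> 0 < f x) ->
  kappa != 0 ->
  (forall x, U x -> forall b, div_T2 g (Dtensor g y f kappa) x b = 0) ->
  (forall x, U x -> forall i j, Pi x i j = Pi x j i) ->
  (forall x, U x -> \sum_(i < n) \sum_(j < n) ginv g x i j * Pi x i j = 0) ->
  (forall x, U x -> forall j, \sum_(i < n) y x i * Pi x i j = 0) ->
  (forall x, U x -> forall i j, w x i j = - w x j i) ->
  (forall x, U x -> forall j, \sum_(i < n) y x i * w x i j = 0) ->
  (forall x, U x -> \sum_(i < n) y x i * a x i = 0) ->
  (forall x, U x -> forall al be,
     cov_low g y x al be =
       lower g y x al * a x be + Pi x al be
       + div_vec g y x / (n%:R - 1) * hproj g y x al be + w x al be) ->
  forall x, U x -> forall al,
    pd al f x = f x * div_vec g y x / (n%:R - 1) * lower g y x al - f x * a x al.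
Proof.
move=> n_ge3 U_open g_sym g_pd g_diff y_diff y_unit f_diff f_pos kappa0 D_div
  _ Pi_tr y_Pi w_anti y_w y_a decomp x Ux al.
have n_gt1 : (1 < n)%N by apply: leq_trans n_ge3.
have g_near : \forall z \near x, (g z)^T = g z by apply: filterS g_sym (U_open x Ux).
have g_unit : g x \in unitmx by apply: posdef_unitmx; exact: g_pd.
have df v : derivable f x v := diff_derivable (f_diff x Ux).
have dg i j v : derivable (fun z => g z i j) x v := diff_derivable (g_diff x Ux i j).
have dy i v : derivable (fun z => y z i) x v := diff_derivable (y_diff x Ux i).
have fx0 : f x != 0 by rewrite gt_eqF ?f_pos.
have ll_def b : lower g y x b = \sum_j g x b j * y x j by [].
have y_ll : \sum_i y x i * lower g y x i = 1 by rewrite (sum_Y_mul_llE ll_def) y_unit.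
have trace_cov := decomp_trace (ginv_mul_metric g_near g_unit) (ginv_sym g_near)
  ll_def y_ll (decomp x Ux) n_gt1 (Pi_tr x Ux) (w_anti x Ux) (y_a x Ux).
have accel := decomp_contract_y (metric_sym g_near) ll_def y_ll (decomp x Ux)
  (y_Pi x Ux) (y_w x Ux).
have div0 b : (\sum_m pd m (fun z => kappa / f z ^+ n) x * y x m) * lower g y x b
    - n%:R^-1 * pd b (fun z => kappa / f z ^+ n) x
    + kappa / f x ^+ n * (div_vec g y x * lower g y x b + a x b) = 0.
  by rewrite -[RHS](D_div x Ux b) div_T2_Dtensor // trace_cov accel.
have := grad_of_div_free y_ll n_gt1 (y_a x Ux) div0 al.
rewrite /pd derive_div_pow ?(leq_trans _ n_ge3) // => grad.
have n0 : n%:R != 0 :> R by rewrite pnatr_eq0 -lt0n ltnW.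
have n1 : n%:R - 1 != 0 :> R by rewrite subr_eq0 pnatr_eq1 gtn_eqF.
have c0 : - (n%:R * (kappa / f x ^+ n) / f x) != 0.
  by rewrite oppr_eq0 !mulf_neq0 ?invr_eq0 ?expf_neq0.
by apply: (mulfI c0); rewrite grad; field; rewrite n1 fx0 expf_neq0.
Qed.
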